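(* Consider joint conditional distributions $p(A_a,B_b|a,b)$ for $a,b\in\{1,2,3\}$ and $A_a,B_b\in\{0,1\}$ such that $A_a=B_b$ with probability 1 whenever $a=b$ and $A_a\neq B_b$ with probability 1 whenever $a\neq b$. If they satisfy the no-signaling conditions that $\sum_{B_b}p(A_a,B_b|a,b)$ is independent of $b$ and $\sum_{A_a}p(A_a,B_b|a,b)$ is independent of $a$, then for all $a\neq b$: $p(0,1|a,b)=p(1,0|a,b)=\tfrac12$, and for all $a=b$: $p(0,0|a,b)=p(1,1|a,b)=\tfrac12$. *)

From mathcomp Require Import all_boot all_order all_algebra.
Set Implicit Arguments. Unset Strict Implicit. Unset Printing Implicit Defensive.
Import Order.TTheory GRing.Theory Num.Theory.
Local Open Scope ring_scope.

(* A behaviour: p a b x y = p(A_a = x, B_b = y | a, b), settings a,b in 'I_3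
   (i.e. {1,2,3} shifted to {0,1,2}), outcomes in bool (false = 0, true = 1). *)
Definition behaviour (R : numDomainType) := 'I_3 -> 'I_3 -> bool -> bool -> R.

Definition is_cond_distr (R : numDomainType) (p : behaviour R) : Prop :=
  (forall a b x y, 0 <= p a b x y) /\
  (forall a b, \sum_(x : bool) \sum_(y : bool) p a b x y = 1).

Definition no_signaling (R : numDomainType) (p : behaviour R) : Prop :=
  (forall a b b' x, \sum_(y : bool) p a b x y = \sum_(y : bool) p a b' x y) /\
  (forall a a' b y, \sum_(x : bool) p a b x y = \sum_(x : bool) p a' b x y).

Definition perfect_corr (R : numDomainType) (p : behaviour R) : Prop :=
  (forall a x y, x != y -> p a a x y = 0) /\
  (forall a b x, a != b -> p a b x x = 0).

From mathcomp Require Import all_boot all_order all_algebra.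
Import Order.TTheory GRing.Theory Num.Theory.
Local Open Scope ring_scope.

(* By perfect correlation each marginal of p(.,.|a,b) is carried by a single
   cell, so no-signaling identifies every cell with a diagonal weight
   q_a(x) := p(x,x|a,a), and for a <> b gives q_a(x) = q_b(1-x).  Going around
   the odd cycle a -> b -> c -> a of the three settings flips the outcome three
   times, so q_a(x) = q_a(1-x); as q_a(0) + q_a(1) = 1, all weights are 1/2. *)

Lemma ord3_two_others (a : 'I_3) :
  exists b c : 'I_3, [/\ a != b, b != c & c != a].
Proof.
by case: a => [[|[|[|//]]] ?];
  [exists (inord 1), (inord 2) | exists (inord 2), (inord 0)
  | exists (inord 0), (inord 1)]; split; apply/eqP => /(congr1 val);
  rewrite /= ?inordK.
Qed.

Lemma half_of_double (R : numFieldType) (u : R) : u + u = 1 -> u = 1 / 2.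
Proof. by move=> h; apply: (canRL (mulfK _)); rewrite ?pnatr_eq0 // mulr_natr mulr2n. Qed.

Section PerfectlyCorrelated.

Context {R : numFieldType} {p : behaviour R}.
Hypotheses (p_distr : is_cond_distr p) (p_corr : perfect_corr p)
           (p_ns : no_signaling p).

Local Notation q a x := (p a a x x).

Lemma cell_perfect_corr a b x y : y != x (+) (a != b) -> p a b x y = 0.
Proof.
have [<-|ab] := eqVneq a b; rewrite ?addbF ?addbT => yN.
  by apply: p_corr.1; rewrite eq_sym.
have -> : y = x by move: yN; case: x; case: y.
exact: p_corr.2.
Qed.

Lemma sumA_perfect_corr a b x : \sum_(y : bool) p a b x y = p a b x (x (+) (a != b)).
Proof.
rewrite (bigD1 (x (+) (a != b))) //= big1 ?addr0 // => y.
exact: cell_perfect_corr.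
Qed.

Lemma sumB_perfect_corr a b y : \sum_(x : bool) p a b x y = p a b (y (+) (a != b)) y.
Proof.
rewrite (bigD1 (y (+) (a != b))) //= big1 ?addr0 // => x xN.
by apply: cell_perfect_corr; apply: contra xN => /eqP->; rewrite -addbA addbb addbF.
Qed.

Lemma cellA_diag a b x : p a b x (x (+) (a != b)) = q a x.
Proof. by rewrite -sumA_perfect_corr (p_ns.1 a b a) sumA_perfect_corr eqxx addbF. Qed.

Lemma cellB_diag a b y : p a b (y (+) (a != b)) y = q b y.
Proof. by rewrite -sumB_perfect_corr (p_ns.2 a b b) sumB_perfect_corr eqxx addbF. Qed.

Lemma diag_flip a b : a != b -> forall x, q a x = q b (~~ x).
Proof.
move=> ab x; rewrite -(cellA_diag a b) -(cellB_diag a b) ab.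
by rewrite !addbT negbK.
Qed.

Lemma diag_sum a : q a false + q a true = 1.
Proof.
by rewrite -(p_distr.2 a a) big_bool /= !sumA_perfect_corr eqxx !addbF addrC.
Qed.

Lemma diag_half a x : q a x = 1 / 2.
Proof.
have [b [c [ab bc ca]]] := ord3_two_others a.
have qN : q a x = q a (~~ x).
  by rewrite (diag_flip _ _ ab) (diag_flip _ _ bc) (diag_flip _ _ ca) negbK.
apply: half_of_double; rewrite {2}qN.
by case: x {qN}; rewrite /= ?diag_sum // addrC diag_sum.
Qed.

Lemma anti_diag_half a b : a != b -> forall x, p a b x (~~ x) = 1 / 2.
Proof. by move=> ab x; rewrite -addbT -ab cellA_diag diag_half. Qed.

End PerfectlyCorrelated.

Theorem mainTheorem10 (R : realFieldType) (p : behaviour R) :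
  is_cond_distr p -> perfect_corr p -> no_signaling p ->
  (forall a b : 'I_3, a != b ->
     p a b false true = 1 / 2 /\ p a b true false = 1 / 2) /\
  (forall a : 'I_3,
     p a a false false = 1 / 2 /\ p a a true true = 1 / 2).
Proof.
move=> distr corr ns; split=> [a b ab | a].
  by split; [exact: (anti_diag_half distr corr ns a b ab false)
            | exact: (anti_diag_half distr corr ns a b ab true)].
by split; [exact: (diag_half distr corr ns a false)
          | exact: (diag_half distr corr ns a true)].
Qed.
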